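(* Let $H$ be a regular non-bipartite graph whose adjacency eigenvalues are integers all having the same 2-adic valuation $\nu_2$. If $G=K_{2}\times H$, then for every vertex $u$ of $G$, $\uparrow^{2}G$ has Laplacian perfect state transfer between $(0,u)$ and $(1,u)$.
   Context: All graphs are simple, undirected and unweighted. The direct product $G\times H$ is the graph with adjacency matrix $A(G)\otimes A(H)$. For a nonzero integer $n$, $\nu_2(n)$ is the exponent of the largest power of $2$ dividing $n$, and $\nu_2(0)=\infty$. The blow-up $\uparrow^{2}G$ has vertex set $\mathbb{Z}_2\times V(G)$, with $(l,u)\sim(m,v)$ iff $u\sim v$ in $G$. A graph with Laplacian $L=D-A$ has Laplacian perfect state transfer between $a,b$ if $\exp(i\tau L)\mathbf{e}_a=\gamma\mathbf{e}_b$ for some $\tau>0$, $\gamma\in\mathbb{C}$. *)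

From HB Require Import structures.
From mathcomp Require Import all_boot all_order all_algebra.
From mathcomp Require Import all_classical all_reals all_analysis.
From mathcomp Require Import complex.
Set Implicit Arguments. Unset Strict Implicit. Unset Printing Implicit Defensive.
Import Order.TTheory GRing.Theory Num.Theory.
Import numFieldNormedType.Exports.
Local Open Scope ring_scope.
Local Open Scope classical_set_scope.

(** The complex numbers over a real type R, seen as a numFieldType
    (so that MathComp-Analysis equips it, and matrices over it, with
    its standard normed topology). *)
Definition CC (R : realType) : numFieldType := R[i].
Definition Cre (R : realType) (x : R) : CC R := (x%:C)%C.
Definition Ci (R : realType) : CC R := Complex 0 1.

Definition simple_graph (T : finType) (e : rel T) : Prop :=
  symmetric e /\ irreflexive e.

Definition deg (T : finType) (e : rel T) (x : T) : nat := #|[set y | e x y]|.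

Definition regular (T : finType) (e : rel T) : Prop :=
  exists k : nat, forall x : T, deg e x = k.

Definition bipartite (T : finType) (e : rel T) : Prop :=
  exists f : T -> bool, forall x y, e x y -> f x != f y.

Definition adjmx (F : pzRingType) (T : finType) (e : rel T) : 'M[F]_#|T| :=
  \matrix_(i, j) (e (enum_val i) (enum_val j))%:R.

Definition lapmx (F : pzRingType) (T : finType) (e : rel T) : 'M[F]_#|T| :=
  \matrix_(i, j) ((i == j)%:R * (deg e (enum_val i))%:R) - adjmx F e.

Definition K2 : rel 'I_2 := fun i j => i != j.

Definition dprod_graph (T1 T2 : finType) (e1 : rel T1) (e2 : rel T2)
  : rel (T1 * T2) := fun x y => e1 x.1 y.1 && e2 x.2 y.2.

Definition blowup2 (T : finType) (e : rel T) : rel ('I_2 * T) :=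
  fun x y => e x.2 y.2.

(** 2-adic valuation on int, with nu2 0 = infinity (encoded as None). *)
Definition nu2 (z : int) : option nat :=
  if z == 0 then None else Some (logn 2 `|z|%N).

Definition mexp (R : realType) (n : nat) (A : 'M[CC R]_n) : 'M[CC R]_n :=
  limn (series (fun k : nat => (k`!%:R)^-1 *: A ^+ k)).

Definition evec (F : pzRingType) (T : finType) (x : T) : 'cV[F]_#|T| :=
  delta_mx (enum_rank x) ord0.

Definition lap_PST (R : realType) (T : finType) (e : rel T) (a b : T) : Prop :=
  exists tau : R, 0 < tau /\
  exists gamma : CC R,
    mexp ((Ci R * Cre tau) *: lapmx (CC R) e) *m evec (CC R) a
    = gamma *: evec (CC R) b.

From HB Require Import structures.
From mathcomp Require Import all_boot all_order all_algebra.
From mathcomp Require Import all_classical all_reals all_analysis.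
From mathcomp Require Import complex ring zify.
Import Order.TTheory GRing.Theory Num.Theory.
Import numFieldNormedType.Exports.

Set Implicit Arguments.
Unset Strict Implicit.
Unset Printing Implicit Defensive.

Local Open Scope ring_scope.
Local Open Scope classical_set_scope.

(* Let B be the blow-up of K_2 x H, with H k-regular, k = a 2^nu (a odd), and let W be
   the swap (l, v) |-> (1 - l, v) of the two copies.  B is 2k-regular, so its Laplacian
   L = 2k - A(B) is real symmetric, and exp(i tau L) = W (tau = pi / 2^(nu+1)) follows
   once W acts on every eigenvector f of L, of eigenvalue l, as the scalar exp(i tau l).
   The adjacency of B only sees the sum s of the two copies of f.  If s = 0, then
   f W = -f and l = 2k, so exp(i tau l) = (-1)^a = -1.  Otherwise (2k - l)/2 is an
   eigenvalue of K_2 x H, hence +- an eigenvalue b 2^nu of H with b odd; it is nonzero,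
   which forces f W = f, and l = (a -+ b) 2^(nu+1) with a -+ b even, so
   exp(i tau l) = 1. *)

Definition exp_partial {K : numFieldType} (z : K) : nat -> K :=
  series (fun k => (k`!%:R)^-1 * z ^+ k).

Section ExpImaginary.
Variable R : realType.
Local Notation C := (CC R).

Lemma normCre (x : R) : `|Cre x| = Cre `|x|.
Proof. by rewrite normc_def /= expr0n /= addr0 sqrtr_sqr. Qed.

Lemma cvg_Cre (u : nat -> R) (x : R) :
  u n @[n --> \oo] --> x -> Cre (u n) @[n --> \oo] --> Cre x.
Proof.
move=> /cvgrPdist_lt ux; apply/cvgrPdist_lt => eps eps_gt0.
have /andP[/eqP/= Im_eps Re_eps_gt0] : (complex.Im eps == 0) && (0 < complex.Re eps).
  by move: eps_gt0; rewrite ltcE.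
have -> : eps = Cre (complex.Re eps) by case: eps {eps_gt0 Re_eps_gt0} Im_eps => ? ? /= ->.
apply: filterS (ux _ Re_eps_gt0) => n /=.
by rewrite /Cre -rmorphB normCre ltcR.
Qed.

Lemma Ci_sqr : Ci R ^+ 2 = -1.
Proof. by apply/eqP; rewrite eq_complex /= !mul0r !mulr0 mul1r addr0 oppr0 sub0r !eqxx. Qed.

Lemma exp_term_Ci (t : R) (k : nat) :
  (k`!%:R)^-1 * (Ci R * Cre t) ^+ k =
  Cre (cos_coeff t k) + Ci R * Cre (sin_coeff t k).
Proof.
have [[m ->] | [m ->]] : ({m | k = m.*2} + {m | k = m.*2.+1})%type.
  by rewrite -(odd_double_half k); case: (odd k); [right | left]; exists k./2.
all: have Ci_even : Ci R ^+ m.*2 = (-1) ^+ m by rewrite -muln2 mulnC exprM Ci_sqr.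
all: rewrite /cos_coeff /sin_coeff /Cre exprMn ?[Ci R ^+ _.+1]exprS Ci_even /=.
all: rewrite odd_double doubleK /= ?mul0r ?mul1r rmorph0 ?mulr0 ?addr0 ?add0r.
all: by rewrite !rmorphM rmorphXn rmorphN1 fmorphV rmorph_nat rmorphXn; ring.
Qed.

Lemma cvg_exp_partial_Ci (t : R) :
  exp_partial (Ci R * Cre t) n @[n --> \oo] --> Cre (cos t) + Ci R * Cre (sin t).
Proof.
have -> : exp_partial (Ci R * Cre t) =
    fun n => Cre (series (cos_coeff t) n) + Ci R * Cre (series (sin_coeff t) n).
  apply/funext => n; rewrite /exp_partial /series /= (eq_bigr _ (fun k _ => exp_term_Ci t k)).
  by rewrite big_split /= -mulr_sumr /Cre !rmorph_sum.
apply: cvgD; first by apply/cvg_Cre; rewrite cos.unlock; exact: is_cvg_series_cos_coeff.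
apply: cvgM; first exact: cvg_cst.
by apply/cvg_Cre; rewrite sin.unlock; exact: is_cvg_series_sin_coeff.
Qed.

Lemma cos_pi_nat (n : nat) : cos (pi * n%:R) = (-1) ^+ n :> R.
Proof. by have := alternatingn (@cosDpi R) n 0; rewrite add0r cos0 mulr1 mulr_natr. Qed.

Lemma sin_pi_nat (n : nat) : sin (pi * n%:R) = 0 :> R.
Proof. by have := alternatingn (@sinDpi R) n 0; rewrite add0r sin0 mulr0 mulr_natr. Qed.

Lemma cvg_exp_partial_pi_int (m : int) :
  exp_partial (Ci R * Cre (pi * m%:~R)) n @[n --> \oo] --> ((-1) ^+ `|m|%N : C).
Proof.
suff -> : (-1) ^+ `|m|%N = Cre (cos (pi * m%:~R)) + Ci R * Cre (sin (pi * m%:~R)).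
  exact: cvg_exp_partial_Ci.
case: m => n; rewrite ?NegzE ?mulrN ?cosN ?sinN /= cos_pi_nat sin_pi_nat ?oppr0;
  by rewrite /Cre rmorph0 mulr0 addr0 rmorphXn rmorphN1.
Qed.

End ExpImaginary.

Lemma cvg_mx_entry {K : numFieldType} m n (u : nat -> 'M[K]_(m, n)) (M : 'M[K]_(m, n)) :
  (forall i j, u N i j @[N --> \oo] --> M i j) -> u N @[N --> \oo] --> M.
Proof.
move=> u_cvg A /= [P PM sPA].
have : \forall N \near \oo, forall ij : 'I_m * 'I_n, P ij.1 ij.2 (u N ij.1 ij.2).
  by apply: filter_forall => -[i j] /=; exact: u_cvg.
by apply: filterS => N uP; apply: sPA => i j; exact: (uP (i, j)).
Qed.

Section MatrixExp.
Variables (R : realType) (n : nat).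
Local Notation C := (CC R).

Lemma mexp_diag_conj (P Q : 'M[C]_n) (d x : 'rV[C]_n) :
  P *m Q = 1%:M -> (forall l, exp_partial (d 0 l) N @[N --> \oo] --> x 0 l) ->
  mexp (Q *m diag_mx d *m P) = Q *m diag_mx x *m P.
Proof.
move=> PQ dx.
have QP : Q *m P = 1%:M := mulmx1C PQ.
have powE k : (Q *m diag_mx d *m P) ^+ k = Q *m diag_mx (\row_l d 0 l ^+ k) *m P.
  elim: k => [|k IHk].
    have -> : \row_l d 0 l ^+ 0 = const_mx 1 by apply/rowP => l; rewrite !mxE.
    by rewrite expr0 diag_const_mx mulmx1 QP.
  rewrite exprS IHk -mulmxE !mulmxA -[Q *m _ *m _ *m Q]mulmxA PQ mulmx1 -[Q *m _ *m _]mulmxA.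
  by rewrite mulmx_diag; congr (_ *m diag_mx _ *m _); apply/rowP => l; rewrite !mxE exprS.
have entryE N i j : series (fun k => (k`!%:R)^-1 *: (Q *m diag_mx d *m P) ^+ k) N i j =
    \sum_l Q i l * exp_partial (d 0 l) N * P l j.
  rewrite /exp_partial /series /= summxE.
  transitivity (\sum_(0 <= k < N) \sum_l (k`!%:R)^-1 * (Q i l * d 0 l ^+ k * P l j)).
    apply: eq_bigr => k _; rewrite mxE powE !mxE mulr_sumr; apply: eq_bigr => l _.
    by rewrite mul_mx_diag !mxE.
  rewrite exchange_big /=; apply: eq_bigr => l _.
  by rewrite mulr_sumr mulr_suml; apply: eq_bigr => k _; ring.
rewrite /mexp; apply: cvg_lim; first exact: norm_hausdorff.
apply: cvg_mx_entry => i j; under eq_fun do rewrite entryE.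
rewrite !mxE; apply: cvg_big => //; first exact: add_continuous.
move=> l _; rewrite mul_mx_diag mxE.
by apply: cvgM; [apply: cvgM; [exact: cvg_cst | exact: dx] | exact: cvg_cst].
Qed.

Lemma mexp_normal_eigen (A W : 'M[C]_n) (c : C) : A \is normalmx ->
  (forall (l : C) (r : 'rV[C]_n), r != 0 -> r *m A = l *: r ->
     exists2 x : C, exp_partial (c * l) N @[N --> \oo] --> x & r *m W = x *: r) ->
  mexp (c *: A) = W.
Proof.
move=> /orthomx_spectralP A_spec eigW.
set P := spectralmx A in A_spec; set d := spectral_diag A in A_spec.
have P_unit : P \in unitmx := spectral_unit A.
have row_eigen l : row l P *m A = d 0 l *: row l P.
  rewrite -row_mul A_spec !mulmxA mulmxV // mul1mx row_mul row_diag_mx.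
  by rewrite -scalemxAl -rowE.
have row_neq0 l : row l P != 0.
  apply/eqP => /(congr1 (mulmx^~ (invmx P))).
  rewrite rowE -mulmxA mulmxV // mulmx1 mul0mx => /matrixP/(_ 0 l)/eqP.
  by rewrite !mxE !eqxx oner_eq0.
pose x := \row_l lim (exp_partial (c * d 0 l) N @[N --> \oo]).
have x_spec l : exp_partial (c * d 0 l) N @[N --> \oo] --> x 0 l /\
    row l P *m W = x 0 l *: row l P.
  have [y cvg_y rowW] := eigW _ _ (row_neq0 l) (row_eigen l).
  by rewrite mxE (cvg_lim _ cvg_y).
have -> : c *: A = invmx P *m diag_mx (c *: d) *m P.
  rewrite {1}A_spec scalemxAl scalemxAr; congr (_ *m _ *m _).
  by apply/matrixP => i j; rewrite !mxE mulrnAr.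
rewrite (@mexp_diag_conj _ _ (c *: d) x (mulmxV P_unit)); last first.
  by move=> l; rewrite mxE; exact: (x_spec l).1.
rewrite -mulmxA.
have -> : diag_mx x *m P = P *m W.
  by apply/row_matrixP => l; rewrite !row_mul row_diag_mx -scalemxAl -rowE (x_spec l).2.
by rewrite mulKmx.
Qed.

End MatrixExp.

Section GraphMatrices.
Variables (F : fieldType) (T : finType).
Implicit Types (e : rel T) (r : 'rV[F]_#|T|).

Lemma deg_sum e x : deg e x = (\sum_y e x y)%N.
Proof.
rewrite /deg -sum1_card big_mkcond /=; apply: eq_bigr => y _.
have -> : (y \in [set y | e x y]) = e x y by apply/idP/idP => [/set_mem | /mem_set].
by case: (e x y).
Qed.

Lemma regular_deg_gt0 e k :
  (forall x, deg e x = k) -> ~ bipartite e -> (0 < k)%N.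
Proof.
move=> e_reg e_nbip; rewrite lt0n; apply/eqP => k0; apply: e_nbip.
exists (fun=> true) => x y exy; move: (e_reg x).
by rewrite k0 deg_sum (bigD1 y) //= exy.
Qed.

Lemma sum_enum_rank (V : nmodType) (G : 'I_#|T| -> V) :
  \sum_i G i = \sum_x G (enum_rank x).
Proof. by rewrite (reindex enum_rank) //; exists enum_val => i; rewrite ?enum_valK ?enum_rankK. Qed.

Lemma mul_row_adjmx e r y :
  (r *m adjmx F e) 0 (enum_rank y) = \sum_x r 0 (enum_rank x) * (e x y)%:R.
Proof. by rewrite mxE sum_enum_rank; apply: eq_bigr => x _; rewrite !mxE !enum_rankK. Qed.

Lemma row_neq0_enum r : r != 0 -> exists x, r 0 (enum_rank x) != 0.
Proof.
move=> r_neq0; have [j rj] : exists j, r 0 j != 0.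
  apply/existsP; apply: contraR r_neq0 => /existsPn r0.
  by apply/eqP/rowP => j; rewrite mxE; exact/eqP/negPn.
by exists (enum_val j); rewrite enum_valK.
Qed.

Lemma eigenvalue_adjmxP e mu :
  reflect (exists2 p : T -> F, (forall y, \sum_x p x * (e x y)%:R = mu * p y) &
                              exists y, p y != 0)
          (eigenvalue (adjmx F e) mu).
Proof.
apply: (iffP eigenvalueP) => [[r rA r_neq0] | [p pA [y0 py0]]].
  exists (fun x => r 0 (enum_rank x)); last exact: row_neq0_enum.
  by move=> y; rewrite -mul_row_adjmx rA !mxE.
exists (\row_i p (enum_val i)).
  apply/rowP => j; rewrite -[j]enum_valK mul_row_adjmx !mxE !enum_rankK -(pA (enum_val j)).
  by apply: eq_bigr => x _; rewrite mxE enum_rankK.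
by apply: contraNneq py0 => /rowP/(_ (enum_rank y0)); rewrite !mxE enum_rankK => ->.
Qed.

Lemma lapmx_regular e k : (forall x, deg e x = k) -> lapmx F e = k%:R%:M - adjmx F e.
Proof.
by move=> ek; apply/matrixP => i j; rewrite !mxE ek; case: (i == j); rewrite ?mul1r ?mul0r.
Qed.

Lemma regular_eigenvalue e k : symmetric e -> (forall x, deg e x = k) -> T ->
  eigenvalue (adjmx F e) k%:R.
Proof.
move=> e_sym ek y0; apply/eigenvalue_adjmxP; exists (fun=> 1); last by exists y0; rewrite oner_eq0.
by move=> y; rewrite mulr1 -(ek y) deg_sum natr_sum; apply: eq_bigr => x _; rewrite mul1r e_sym.
Qed.

Definition fun_mx (g : T -> T) : 'M[F]_#|T| :=
  \matrix_(i, j) (enum_val j == g (enum_val i))%:R.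

Variable g : T -> T.
Hypothesis gK : involutive g.

Lemma mul_row_fun_mx r y : (r *m fun_mx g) 0 (enum_rank y) = r 0 (enum_rank (g y)).
Proof.
rewrite mxE sum_enum_rank (bigD1 (g y)) //= !mxE !enum_rankK gK eqxx mulr1 big1 ?addr0 //.
move=> x gyx; rewrite !mxE !enum_rankK; case: eqP => [yE | _]; last by rewrite mulr0.
by rewrite yE gK eqxx in gyx.
Qed.

Lemma fun_mx_evec a : fun_mx g *m evec F a = evec F (g a).
Proof.
apply/matrixP => i j; rewrite !mxE (bigD1 (enum_rank a)) //= big1 ?addr0; last first.
  by move=> l /negbTE la; rewrite !mxE la mulr0.
rewrite !mxE ord1 !eqxx mulr1 enum_rankK andbT.
suff -> : (a == g (enum_val i)) = (i == enum_rank (g a)) by [].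
by apply/eqP/eqP => [-> | ->]; rewrite ?gK ?enum_valK // enum_rankK gK.
Qed.

End GraphMatrices.

Lemma lapmx_normal (C : numClosedFieldType) (T : finType) (e : rel T) :
  symmetric e -> lapmx C e \is normalmx.
Proof.
move=> e_sym; apply: symmetric_normalmx.
  apply/is_hermitianmxP; rewrite expr0 scale1r; apply/matrixP => i j.
  by rewrite !mxE e_sym eq_sym; case: eqP => [-> | _]; rewrite ?mul0r.
by apply/mxOverP => i j; rewrite !mxE realB // ?realM ?realn.
Qed.

Lemma ord2P (l : 'I_2) : l = ord0 \/ l = ord_max.
Proof. by case: l => -[|[|//]] lt_l2; [left | right]; apply: val_inj. Qed.

Lemma rev_ord2_0 : rev_ord (ord0 : 'I_2) = ord_max. Proof. exact: val_inj. Qed.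
Lemma rev_ord2_max : rev_ord (ord_max : 'I_2) = ord0. Proof. exact: val_inj. Qed.

Lemma big_ord2 (V : nmodType) (G : 'I_2 -> V) : \sum_i G i = G ord0 + G ord_max.
Proof. by rewrite big_ord_recl big_ord1; congr (_ + G _); apply: val_inj. Qed.

Lemma big_pair (V : nmodType) (I J : finType) (G : I * J -> V) :
  \sum_p G p = \sum_i \sum_j G (i, j).
Proof. by rewrite (pair_bigA _ (fun i j => G (i, j))); apply: eq_bigr => -[]. Qed.

Definition layer_swap {U : Type} (v : 'I_2 * U) : 'I_2 * U := (rev_ord v.1, v.2).

Lemma layer_swapK (U : Type) : involutive (@layer_swap U).
Proof. by move=> [l x]; rewrite /layer_swap rev_ordK. Qed.

Section BlowupProduct.
Variables (U T : finType).

Lemma deg_blowup2 (G : rel U) v : deg (blowup2 G) v = (deg G v.2).*2.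
Proof. by rewrite !deg_sum big_pair big_ord2 -addnn. Qed.

Lemma deg_dprod_K2 (e : rel T) v : deg (dprod_graph K2 e) v = deg e v.2.
Proof.
rewrite !deg_sum big_pair big_ord2 /dprod_graph /K2 /=.
by case: (ord2P v.1) => ->; rewrite eqxx /= big1_eq ?add0r ?addr0.
Qed.

Variable F : numFieldType.

Lemma sum_blowup2 (G : rel U) (f : 'I_2 * U -> F) w :
  \sum_v f v * (blowup2 G v w)%:R = \sum_x (f (ord0, x) + f (ord_max, x)) * (G x w.2)%:R.
Proof. by rewrite big_pair big_ord2 -big_split; apply: eq_bigr => x _; rewrite mulrDl. Qed.

Lemma sum_dprod_K2 (e : rel T) (g : 'I_2 * T -> F) w :
  \sum_v g v * (dprod_graph K2 e v w)%:R = \sum_x g (rev_ord w.1, x) * (e x w.2)%:R.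
Proof.
rewrite big_pair big_ord2 /dprod_graph /K2 /=.
case: (ord2P w.1) => -> /=; rewrite ?rev_ord2_0 ?rev_ord2_max.
  by rewrite [X in X + _]big1 ?add0r // => x _; rewrite mulr0.
by rewrite [X in _ + X]big1 ?addr0 // => x _; rewrite mulr0.
Qed.

Lemma dprod_K2_eigenvalue (e : rel T) mu :
  eigenvalue (adjmx F (dprod_graph K2 e)) mu ->
  eigenvalue (adjmx F e) mu \/ eigenvalue (adjmx F e) (- mu).
Proof.
move=> /eigenvalue_adjmxP[g g_eig [[i y0] g_neq0]].
have g_eq l y : \sum_x g (rev_ord l, x) * (e x y)%:R = mu * g (l, y).
  by rewrite -(sum_dprod_K2 _ _ (l, y)) g_eig.
pose p x := g (ord0, x) + g (ord_max, x).
pose q x := g (ord0, x) - g (ord_max, x).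
have [p_y0 | q_y0] : p y0 != 0 \/ q y0 != 0.
  apply/orP; rewrite -negb_and; apply: contra g_neq0 => /andP[/eqP p0 /eqP q0].
  have g0 : g (ord0, y0) = 0.
    have : g (ord0, y0) *+ 2 = p y0 + q y0 by rewrite /p /q mulr2n addrACA subrr addr0.
    by rewrite p0 q0 addr0 => /eqP; rewrite mulrn_eq0 => /eqP.
  have g1 : g (ord_max, y0) = 0 by move: p0; rewrite /p g0 add0r.
  by case: (ord2P i) => ->; apply/eqP.
- left; apply/eigenvalue_adjmxP; exists p; last by exists y0.
  move=> y; rewrite /p mulrDr -(g_eq ord0) -(g_eq ord_max) rev_ord2_0 rev_ord2_max.
  rewrite addrC -big_split /=.
  by apply: eq_bigr => x _; rewrite mulrDl.
- right; apply/eigenvalue_adjmxP; exists q; last by exists y0.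
  move=> y; rewrite /q mulNr -mulrN opprB mulrBr -(g_eq ord0) -(g_eq ord_max).
  rewrite rev_ord2_0 rev_ord2_max -sumrB.
  by apply: eq_bigr => x _; rewrite mulrBl.
Qed.

Lemma blowup2_eigen (G : rel U) (f : 'I_2 * U -> F) lam :
  ~ eigenvalue (adjmx F G) 0 ->
  (forall w, \sum_v f v * (blowup2 G v w)%:R = lam * f w) -> (exists w, f w != 0) ->
  (lam = 0 /\ forall w, f (layer_swap w) = - f w) \/
  (eigenvalue (adjmx F G) (lam / 2) /\ forall w, f (layer_swap w) = f w).
Proof.
move=> G_0 f_eig [w0 fw0].
pose s x := f (ord0, x) + f (ord_max, x).
have f_eq w : lam * f w = \sum_x s x * (G x w.2)%:R by rewrite -f_eig sum_blowup2.
have swapE w : f (layer_swap w) = s w.2 - f w.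
  case: w => l x; rewrite /s /layer_swap /=.
  by case: (ord2P l) => ->; rewrite ?rev_ord2_0 ?rev_ord2_max ?addrK // addrC addKr.
have [/forallP s0 | /forallPn[x0 sx0]] := boolP [forall x, s x == 0].
  left; split; last by move=> w; rewrite swapE (eqP (s0 _)) sub0r.
  apply/eqP; have : lam * f w0 == 0.
    by rewrite f_eq big1 // => x _; rewrite (eqP (s0 x)) mul0r.
  by rewrite mulf_eq0 (negbTE fw0) orbF.
have lam_f y : lam * f (ord_max, y) = lam * f (ord0, y) by rewrite !f_eq.
have s_eig : eigenvalue (adjmx F G) (lam / 2).
  apply/eigenvalue_adjmxP; exists s => [y | ]; last by exists x0.
  rewrite -(f_eq (ord0, y)) /s mulrDr (mulrAC lam _ (f (ord0, y))).
  by rewrite (mulrAC lam _ (f (ord_max, y))) lam_f -splitr.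
right; split => // w.
have lam_neq0 : lam != 0.
  by apply/eqP => lam0; apply: G_0; move: s_eig; rewrite lam0 mul0r.
rewrite swapE /s; case: w => l x /=.
by case: (ord2P l) => ->; rewrite ?(mulfI lam_neq0 (lam_f x)) ?addrK // -addrA subrr addr0.
Qed.

End BlowupProduct.

Lemma odd_part_2 (n : nat) : (0 < n)%N -> exists2 a, odd a & n = (a * 2 ^ logn 2 n)%N.
Proof.
by move=> n_gt0; have [a] := pfactor_coprime (isT : prime 2) n_gt0; rewrite coprime2n; exists a.
Qed.

Lemma nu2_Some (z : int) nu : nu2 z = Some nu -> exists2 b : int, odd `|b|%N & z = b * 2 ^+ nu.
Proof.
rewrite /nu2; case: eqP => // /eqP z_neq0 [<-].
have z_gt0 : (0 < `|z|)%N by rewrite absz_gt0.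
have [b b_odd zE] := odd_part_2 z_gt0.
exists ((-1) ^+ (z < 0)%R * b%:Z); first by rewrite abszMsign.
by rewrite {1}[z]intEsign [in LHS]zE PoszM -mulrA -[Posz (2 ^ _)]natz natrX.
Qed.

Section BlowupK2Laplacian.
Variables (F : numFieldType) (T : finType) (e : rel T) (k nu a : nat).
Hypothesis e_reg : forall x, deg e x = k.
Hypothesis a_odd : odd a.
Hypothesis k_split : k = (a * 2 ^ nu)%N.
Hypothesis e_spec : forall mu, eigenvalue (adjmx F e) mu ->
  exists2 b : int, odd `|b|%N & mu = (b * 2 ^+ nu)%:~R.

Local Notation V := (('I_2 * ('I_2 * T))%type : finType).
Local Notation B := (blowup2 (dprod_graph K2 e)).

Lemma blowup2_K2_lap_eigen (r : 'rV[F]_#|V|) l :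
  r != 0 -> r *m lapmx F B = l *: r ->
  exists m : int, l = (m * 2 ^+ nu.+1)%:~R /\ r *m fun_mx F layer_swap = (-1) ^+ `|m|%N *: r.
Proof.
move=> r_neq0 rL.
have G_0 : ~ eigenvalue (adjmx F (dprod_graph K2 e)) 0.
  have H_0 : ~ eigenvalue (adjmx F e) 0.
    by move=> /e_spec[b b_odd /eqP]; rewrite eq_sym intr_eq0 mulf_eq0 expf_eq0 /=; lia.
  by case/dprod_K2_eigenvalue; rewrite ?oppr0.
have k2E : (k.*2)%:R = (a%:Z * 2 ^+ nu.+1)%:~R :> F.
  by rewrite k_split -muln2 !natrM natrX intrM rmorphXn /= exprS; ring.
pose f v := r 0 (enum_rank v).
have f_eig w : \sum_v f v * (B v w)%:R = ((k.*2)%:R - l) * f w.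
  have rA : r *m adjmx F B = ((k.*2)%:R - l) *: r.
    move: rL; rewrite (@lapmx_regular _ _ _ k.*2) => [|v]; last first.
      by rewrite deg_blowup2 deg_dprod_K2 e_reg.
    by rewrite mulmxBr mul_mx_scalar scalerBl => /eqP; rewrite subr_eq addrC -subr_eq => /eqP <-.
  by rewrite -mul_row_adjmx rA mxE.
have rW c : (forall w, f (layer_swap w) = c * f w) -> r *m fun_mx F layer_swap = c *: r.
  move=> fW; apply/rowP => j; rewrite -[j]enum_valK mul_row_fun_mx; last exact: layer_swapK.
  by rewrite mxE; exact: fW.
have [[lam0 f_anti] | [G_lam f_sym]] := blowup2_eigen G_0 f_eig (row_neq0_enum r_neq0).
  exists a; split.
    by rewrite -k2E; apply/eqP; rewrite eq_sym -subr_eq0 lam0.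
  by rewrite -signr_odd a_odd expr1; apply: rW => w; rewrite f_anti mulN1r.
have [b b_odd lamE] : exists2 b : int, odd `|b|%N & ((k.*2)%:R - l) / 2 = (b * 2 ^+ nu)%:~R.
  case/dprod_K2_eigenvalue: G_lam => /e_spec[b b_odd bE]; first by exists b.
  by exists (- b); rewrite ?abszN // mulNr intrN -bE opprK.
exists (a%:Z - b); split.
  have -> : l = (k.*2)%:R - 2 * (b * 2 ^+ nu)%:~R by rewrite -lamE; field.
  by rewrite k2E !intrM intrB !rmorphXn /= exprS; ring.
have even_ab : ~~ odd `|a%:Z - b|%N by lia.
by rewrite -signr_odd (negbTE even_ab) expr0; apply: rW => w; rewrite f_sym mul1r.
Qed.

End BlowupK2Laplacian.

Lemma blowup2_dprod_K2_sym (T : finType) (e : rel T) :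
  symmetric e -> symmetric (blowup2 (dprod_graph K2 e)).
Proof. by move=> e_sym v w; rewrite /blowup2 /dprod_graph /K2 e_sym eq_sym. Qed.

Section BlowupK2Transfer.
Variables (R : realType) (T : finType) (e : rel T) (k nu a : nat).
Hypothesis e_sym : symmetric e.
Hypothesis e_reg : forall x, deg e x = k.
Hypothesis a_odd : odd a.
Hypothesis k_split : k = (a * 2 ^ nu)%N.
Hypothesis e_spec : forall mu, eigenvalue (adjmx (CC R) e) mu ->
  exists2 b : int, odd `|b|%N & mu = (b * 2 ^+ nu)%:~R.

Lemma mexp_lap_blowup2_K2 :
  mexp ((Ci R * Cre (pi / 2 ^+ nu.+1)) *: lapmx (CC R) (blowup2 (dprod_graph K2 e))) =
  fun_mx (CC R) layer_swap.
Proof.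
apply: mexp_normal_eigen; first exact/lapmx_normal/blowup2_dprod_K2_sym.
move=> l r r_neq0 rL.
have [m [-> rW]] := blowup2_K2_lap_eigen e_reg a_odd k_split e_spec r_neq0 rL.
exists ((-1) ^+ `|m|%N) => //.
suff -> : Ci R * Cre (pi / 2 ^+ nu.+1) * (m * 2 ^+ nu.+1)%:~R = Ci R * Cre (pi * m%:~R).
  exact: cvg_exp_partial_pi_int.
rewrite -mulrA -(rmorph_int (real_complex R)) /Cre -rmorphM intrM rmorphXn /=.
by congr (_ * (_)%:C)%C; field; rewrite expf_neq0 // pnatr_eq0.
Qed.

End BlowupK2Transfer.

Theorem corollary8 (R : realType) (T : finType) (e : rel T) :
  simple_graph e ->
  regular e ->
  ~ bipartite e ->
  (forall a : CC R, eigenvalue (adjmx (CC R) e) a -> exists z : int, a = z%:~R) ->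
  (forall z1 z2 : int,
      eigenvalue (adjmx (CC R) e) z1%:~R ->
      eigenvalue (adjmx (CC R) e) z2%:~R -> nu2 z1 = nu2 z2) ->
  forall u : 'I_2 * T,
    lap_PST R (blowup2 (dprod_graph K2 e)) (ord0, u) (ord_max, u).
Proof.
move=> [e_sym _] [k e_reg] e_nbip e_int e_nu2 u.
have k_gt0 : (0 < k)%N := regular_deg_gt0 e_reg e_nbip.
have [a a_odd k_split] := odd_part_2 k_gt0.
have e_spec mu : eigenvalue (adjmx (CC R) e) mu ->
    exists2 b : int, odd `|b|%N & mu = (b * 2 ^+ logn 2 k)%:~R.
  move=> mu_eig; have [z zE] := e_int mu mu_eig; rewrite zE in mu_eig *.
  have k_eig : eigenvalue (adjmx (CC R) e) (k%:Z)%:~R := regular_eigenvalue (CC R) e_sym e_reg u.2.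
  have [|b b_odd ->] := @nu2_Some z (logn 2 k); last by exists b.
  by rewrite (e_nu2 _ _ mu_eig k_eig) /nu2 eqz_nat eqn0Ngt k_gt0.
exists (pi / 2 ^+ (logn 2 k).+1); split; first by rewrite divr_gt0 ?pi_gt0 ?exprn_gt0.
exists 1; rewrite (mexp_lap_blowup2_K2 e_sym e_reg a_odd k_split e_spec) scale1r.
rewrite fun_mx_evec; last exact: layer_swapK.
by rewrite /layer_swap /= rev_ord2_0.
Qed.
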